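(* Let $\mathcal{S}=\langle\mathcal{L},\vdash\rangle$ be a logical structure and $\varrho,\sigma\subseteq\mathcal{P}(\mathcal{L})\times\mathcal{L}$. (i) $(\vdash^\varrho)^\sigma\,\subseteq\,\vdash^\varrho$, with equality if $\varrho\subseteq\sigma$. (ii) If $\mathcal{S}$ is monotonic, then $(\vdash^\varrho)^\sigma\,\subseteq\,\vdash^\sigma$. (iii) If $\varrho\subseteq\sigma$, then $(\vdash^\varrho)^\sigma\,\subseteq\,\vdash^\sigma$. (iv) If $\vdash^\sigma\,\subseteq\,\vdash^\varrho$, then $\vdash^\sigma\,\subseteq\,(\vdash^\varrho)^\sigma$. (v) If $\varrho\subseteq\sigma$, then $\vdash^\varrho\,=\,\vdash^\sigma$ iff $(\vdash^\varrho)^\sigma\,=\,\vdash^\sigma$. Moreover, statements (i)–(v) remain true when $\vdash^\varrho$, $\vdash^\sigma$ and $(\vdash^\varrho)^\sigma$ are replaced throughout by the pure companions $\vdash^{p\varrho}$, $\vdash^{p\sigma}$ and $(\vdash^{p\varrho})^{p\sigma}$ respectively.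
   Context: A logical structure is a pair $\langle\mathcal{L},\vdash\rangle$ with $\mathcal{L}$ a set and $\vdash\subseteq\mathcal{P}(\mathcal{L})\times\mathcal{L}$ arbitrary; it is monotonic if $\Gamma\vdash\alpha$ and $\Gamma\subseteq\Sigma$ imply $\Sigma\vdash\alpha$. For $\varrho\subseteq\mathcal{P}(\mathcal{L})\times\mathcal{L}$: $\Gamma\vdash^\varrho\alpha$ iff there is $\Delta\subseteq\Gamma$ with $(\Delta,\alpha)\in\varrho$ and $\Delta\vdash\alpha$; $\Gamma\vdash^{p\varrho}\alpha$ iff there is a nonempty $\Delta\subseteq\Gamma$ with $(\Delta,\alpha)\in\varrho$ and $\Delta\vdash\alpha$. $(\vdash^\varrho)^\sigma$ denotes the $\sigma$-companion of $\langle\mathcal{L},\vdash^\varrho\rangle$, and $(\vdash^{p\varrho})^{p\sigma}$ the pure $\sigma$-companion of $\langle\mathcal{L},\vdash^{p\varrho}\rangle$. *)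

Set Implicit Arguments.

Definition lrel (L : Type) := (L -> Prop) -> L -> Prop.

Definition subset {L : Type} (A B : L -> Prop) : Prop := forall x, A x -> B x.

Definition nonempty {L : Type} (A : L -> Prop) : Prop := exists x, A x.

Definition rsub {L : Type} (r s : lrel L) : Prop :=
  forall Gamma a, r Gamma a -> s Gamma a.
Definition req {L : Type} (r s : lrel L) : Prop := rsub r s /\ rsub s r.

Definition monotonic {L : Type} (vd : lrel L) : Prop :=
  forall Gamma Sigma a, vd Gamma a -> subset Gamma Sigma -> vd Sigma a.

Definition companion {L : Type} (vd rho : lrel L) : lrel L :=
  fun Gamma a => exists Delta, subset Delta Gamma /\ rho Delta a /\ vd Delta a.

Definition pcompanion {L : Type} (vd rho : lrel L) : lrel L :=
  fun Gamma a => exists Delta, nonempty Delta /\ subset Delta Gamma /\ rho Delta a /\ vd Delta a.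

(* Gamma |-^rho a says that some Delta included in Gamma has (Delta, a) in
   rho /\ |-; so every companion is upward closed (monotonic), and the
   companion of a monotonic relation lies inside it.  This gives (i), (ii)
   and (iii); (i) with rho <= sigma and (iv) come from choosing Delta := Gamma.
   The pure companion w.r.t. rho is the plain companion w.r.t. the
   restriction of rho to nonempty premise sets, so the pure statements are
   the plain ones for these restrictions. *)

From Stdlib Require Import Setoid Morphisms.

Definition pure {L : Type} (rho : lrel L) : lrel L :=
  fun Delta a => nonempty Delta /\ rho Delta a.

Section Relations.
Context {L : Type}.

Lemma subset_refl (A : L -> Prop) : subset A A.
Proof. intros x Hx; exact Hx. Qed.

Lemma subset_trans (A B C : L -> Prop) : subset A B -> subset B C -> subset A C.
Proof. intros HAB HBC x Hx; apply HBC, HAB, Hx. Qed.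

Global Instance rsub_preorder : PreOrder (@rsub L).
Proof. split; [intros r G a H | intros r s t Hrs Hst G a H]; auto. Qed.

Global Instance req_equivalence : Equivalence (@req L).
Proof.
  split.
  - intros r; split; reflexivity.
  - intros r s [Hrs Hsr]; split; assumption.
  - intros r s t [Hrs Hsr] [Hst Hts]; split; etransitivity; eassumption.
Qed.

Global Instance rsub_proper : Proper (@req L ==> @req L ==> iff) (@rsub L).
Proof.
  intros r r' [Hr Hr'] s s' [Hs Hs']; split; intros H.
  - rewrite Hr', <- Hs; exact H.
  - rewrite Hr, <- Hs'; exact H.
Qed.

Lemma pure_rsub (rho sigma : lrel L) : rsub rho sigma -> rsub (pure rho) (pure sigma).
Proof. intros Hrs G a [Hne Hr]; split; auto. Qed.

End Relations.

Section Companion.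
Context {L : Type}.
Implicit Types (vd rho sigma : lrel L).

Lemma companion_self vd rho Delta a :
  rho Delta a -> vd Delta a -> companion vd rho Delta a.
Proof. intros Hr Hv; exists Delta; auto using subset_refl. Qed.

Lemma companion_monotonic vd rho : monotonic (companion vd rho).
Proof.
  intros G S a [D [HDG HD]] HGS; exists D; split; [eapply subset_trans|]; eauto.
Qed.

Lemma companion_rsub_monotonic vd rho : monotonic vd -> rsub (companion vd rho) vd.
Proof. intros Hm G a [D [HDG [_ Hv]]]; exact (Hm _ _ _ Hv HDG). Qed.

Global Instance companion_rsub_proper : Proper (rsub ==> rsub ==> rsub) (@companion L).
Proof.
  intros vd vd' Hvd rho rho' Hrho G a [D [HDG [Hr Hv]]]; exists D; auto.
Qed.

Global Instance companion_req_proper : Proper (req ==> req ==> req) (@companion L).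
Proof.
  intros vd vd' [Hvd Hvd'] rho rho' [Hrho Hrho'].
  split; apply companion_rsub_proper; assumption.
Qed.

Lemma pcompanion_companion_pure vd rho :
  req (pcompanion vd rho) (companion vd (pure rho)).
Proof.
  split.
  - intros G a [D [Hne [HDG [Hr Hv]]]]; exists D; split; [|split; [split|]]; auto.
  - intros G a [D [HDG [[Hne Hr] Hv]]]; exists D; auto.
Qed.

Lemma companion_companion_rsub vd rho sigma :
  rsub (companion (companion vd rho) sigma) (companion vd rho).
Proof. apply companion_rsub_monotonic, companion_monotonic. Qed.

Lemma rsub_companion_companion vd rho sigma :
  rsub (companion vd sigma) (companion vd rho) ->
  rsub (companion vd sigma) (companion (companion vd rho) sigma).
Proof.
  intros Hsr G a [D [HDG [Hs Hv]]].
  exists D; split; [|split]; auto using companion_self.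
Qed.

Lemma companion_companion_req vd rho sigma :
  rsub rho sigma -> req (companion (companion vd rho) sigma) (companion vd rho).
Proof.
  intros Hrs; split; [apply companion_companion_rsub|].
  intros G a [D [HDG [Hr Hv]]].
  exists D; split; [|split]; auto using companion_self.
Qed.

Lemma companion_companion_rsub_monotonic vd rho sigma :
  monotonic vd -> rsub (companion (companion vd rho) sigma) (companion vd sigma).
Proof.
  intros Hm; apply companion_rsub_proper; [apply companion_rsub_monotonic, Hm | reflexivity].
Qed.

Lemma companion_companion_rsub_of_rsub vd rho sigma :
  rsub rho sigma -> rsub (companion (companion vd rho) sigma) (companion vd sigma).
Proof.
  intros Hrs; rewrite companion_companion_rsub.
  apply companion_rsub_proper; [reflexivity | exact Hrs].
Qed.

Lemma companion_req_iff vd rho sigma :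
  rsub rho sigma ->
  (req (companion vd rho) (companion vd sigma) <->
   req (companion (companion vd rho) sigma) (companion vd sigma)).
Proof. intros Hrs; rewrite (companion_companion_req vd rho sigma Hrs); reflexivity. Qed.

Lemma companion_theorem vd rho sigma :
  (rsub (companion (companion vd rho) sigma) (companion vd rho)
   /\ (rsub rho sigma -> req (companion (companion vd rho) sigma) (companion vd rho)))
  /\ (monotonic vd -> rsub (companion (companion vd rho) sigma) (companion vd sigma))
  /\ (rsub rho sigma -> rsub (companion (companion vd rho) sigma) (companion vd sigma))
  /\ (rsub (companion vd sigma) (companion vd rho) ->
        rsub (companion vd sigma) (companion (companion vd rho) sigma))
  /\ (rsub rho sigma ->
        (req (companion vd rho) (companion vd sigma) <->
         req (companion (companion vd rho) sigma) (companion vd sigma))).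
Proof.
  split; [split|split; [|split; [|split]]].
  - apply companion_companion_rsub.
  - apply companion_companion_req.
  - apply companion_companion_rsub_monotonic.
  - apply companion_companion_rsub_of_rsub.
  - apply rsub_companion_companion.
  - apply companion_req_iff.
Qed.

End Companion.

Theorem theorem3p10 (L : Type) (vd rho sigma : lrel L) :
  (* plain companions *)
  ((rsub (companion (companion vd rho) sigma) (companion vd rho)
    /\ (rsub rho sigma -> req (companion (companion vd rho) sigma) (companion vd rho)))
   /\ (monotonic vd -> rsub (companion (companion vd rho) sigma) (companion vd sigma))
   /\ (rsub rho sigma -> rsub (companion (companion vd rho) sigma) (companion vd sigma))
   /\ (rsub (companion vd sigma) (companion vd rho) ->
         rsub (companion vd sigma) (companion (companion vd rho) sigma))
   /\ (rsub rho sigma ->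
         (req (companion vd rho) (companion vd sigma) <->
          req (companion (companion vd rho) sigma) (companion vd sigma))))
  /\
  (* pure companions *)
  ((rsub (pcompanion (pcompanion vd rho) sigma) (pcompanion vd rho)
    /\ (rsub rho sigma -> req (pcompanion (pcompanion vd rho) sigma) (pcompanion vd rho)))
   /\ (monotonic vd -> rsub (pcompanion (pcompanion vd rho) sigma) (pcompanion vd sigma))
   /\ (rsub rho sigma -> rsub (pcompanion (pcompanion vd rho) sigma) (pcompanion vd sigma))
   /\ (rsub (pcompanion vd sigma) (pcompanion vd rho) ->
         rsub (pcompanion vd sigma) (pcompanion (pcompanion vd rho) sigma))
   /\ (rsub rho sigma ->
         (req (pcompanion vd rho) (pcompanion vd sigma) <->
          req (pcompanion (pcompanion vd rho) sigma) (pcompanion vd sigma)))).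
Proof.
  split; [apply companion_theorem|].
  repeat setoid_rewrite pcompanion_companion_pure.
  pose proof (companion_theorem vd (pure rho) (pure sigma)).
  pose proof (pure_rsub rho sigma).
  tauto.
Qed.
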